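(* Let $Y$ be a generic Enriques surface. For effective $\beta\in H_2(Y,\mathbb{Z})$ (modulo torsion) with $2\nmid\beta$ and $\beta^2=2d$, let $M_d$ be one of the two connected components of the moduli space of stable $1$-dimensional sheaves $F$ on $Y$ with support class $\beta$ and $\chi(F)=1$ (smooth projective of dimension $2d+1$), with Hilbert–Chow morphism $\rho:M_d\to\mathbb{P}$, perverse Hodge numbers ${}^ph^{i,j}(M_d)=\dim H^j(\mathbb{P},{}^p\mathcal{H}^i(R\rho_*\mathbb{Q}[\dim M_d]))$ and Betti numbers $b_{i,d}=b_i(M_d)$. Let \[ F(u,p,q)=\frac{(1-u^{-1}p)(1-up)}{(-p)}\prod_{m\ge1}\frac{1}{(1-q^m)^8}\prod_{\substack{m\ge1\\ m\text{ odd}}}\frac{1}{(1-u^{-2}q^m)(1-u^2q^m)(1-upq^m)(1-up^{-1}q^m)(1-u^{-1}pq^m)(1-u^{-1}p^{-1}q^m)(1-q^m)^2}. \] Assume that the ${}^ph^{i,j}(M_d)$ depend only on $d$ and that \[ \sum_{d\ge0}\sum_{i,j}{}^ph^{i,j}(M_d)(-1)^{i+j}p^iu^jq^d=F(u,p,q)-\Big(\sum_{d\ge0}u^{-(2d+1)}\sum_{i=0}^{4d+2}(-u)^ib_{i,d}\Big)\prod_{m\ge1}\frac{(1-u^2q^{2m})(1-u^{-2}q^{2m})(1-q^{2m})^2}{(1-upq^{2m})(1-u^{-1}p^{-1}q^{2m})(1-u^{-1}pq^{2m})(1-up^{-1}q^{2m})}. \] Then for all $d\ge0$ and integers $i,j$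 with $i,j<-d/2-1$, \[ {}^ph^{i,j}(M_d)(-1)^{i+j}=\mathrm{Coeff}_{p^iu^jq^d}\big[F(u,p,q)\big]. \]
   Context: $F$ equals, in the paper's notation, $\frac{(1-u^{-1}p)(1-up)}{(-p)}\frac{\Theta(u^2,q^2)}{\Theta(u^2,q)}\frac{\eta(q^2)^8}{\eta(q)^{16}}\frac{\Theta(pu,q^2)\Theta(pu^{-1},q^2)}{\Theta(pu,q)\Theta(pu^{-1},q)}$ with $\Theta(p,q)=(p^{1/2}-p^{-1/2})\prod_{m\ge1}\frac{(1-pq^m)(1-p^{-1}q^m)}{(1-q^m)^2}$ and $\eta(q)=q^{1/24}\prod_{m\ge1}(1-q^m)$. ${}^p\mathcal{H}^i$ is perverse cohomology for the middle perversity. *)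

(* Elementary model of the ring of formal power series in q
   whose coefficients are Laurent polynomials in u, p with integer
   coefficients, i.e.  Z[u^{+-1}, p^{+-1}][[q]]. *)
From mathcomp Require Import all_boot all_order all_algebra.
Set Implicit Arguments. Unset Strict Implicit. Unset Printing Implicit Defensive.
Import Order.TTheory GRing.Theory Num.Theory.
Local Open Scope ring_scope.

Record Mon := MkMon { mc : int; mpe : int; mue : int }.

Definition Laur := seq Mon.

Definition lcoef (f : Laur) (i j : int) : int :=
  \sum_(t <- f | (mpe t == i) && (mue t == j)) mc t.

Definition lmon (c i j : int) : Laur := [:: MkMon c i j].
Definition lone : Laur := lmon 1 0 0.
Definition ladd (f g : Laur) : Laur := f ++ g.
Definition lopp (f : Laur) : Laur := [seq MkMon (- mc t) (mpe t) (mue t) | t <- f].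
Definition lmul (f g : Laur) : Laur :=
  [seq MkMon (mc s * mc t) (mpe s + mpe t) (mue s + mue t) | s <- f, t <- g].
Definition lexp (f : Laur) (n : nat) : Laur := iter n (lmul f) lone.

Definition Ser := nat -> Laur.

Definition sconst (f : Laur) : Ser := fun d => if d == 0%N then f else [::].
Definition sone : Ser := sconst lone.
Definition sadd (A B : Ser) : Ser := fun d => ladd (A d) (B d).
Definition sopp (A : Ser) : Ser := fun d => lopp (A d).
Definition ssub (A B : Ser) : Ser := sadd A (sopp B).
Definition smul (A B : Ser) : Ser :=
  fun d => flatten [seq lmul (A k) (B (d - k)%N) | k <- iota 0 d.+1].
Definition sprod (l : seq Ser) : Ser := foldr smul sone l.

Definition oneminus (c : Laur) (m : nat) : Ser :=
  sadd sone (fun d => if d == m then lopp c else [::]).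
(* 1 / (1 - c q^m) = sum_k c^k q^{mk}   (m >= 1) *)
Definition geom (c : Laur) (m : nat) : Ser :=
  fun d => if (d %% m == 0)%N then lexp c (d %/ m) else [::].

(* Infinite product prod_{m >= 1} G m, for factors with G m = 1 + O(q^m):
   the coefficient of q^d only involves the factors with m <= d. *)
Definition sprod_inf (G : nat -> Ser) : Ser :=
  fun d => sprod [seq G m | m <- iota 1 d] d.

Definition Coeff (A : Ser) (d : nat) (i j : int) : int := lcoef (A d) i j.

Definition m1 : Laur := lmon 1 0 0.
Definition mu2 : Laur := lmon 1 0 2.
Definition mum2 : Laur := lmon 1 0 (-2).
Definition mup : Laur := lmon 1 1 1.
Definition mupi : Laur := lmon 1 (-1) 1.
Definition muip : Laur := lmon 1 1 (-1).
Definition muipi : Laur := lmon 1 (-1) (-1).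

Definition Fpref : Laur :=
  lmul (lmul (ladd lone (lopp muip)) (ladd lone (lopp mup))) (lmon (-1) (-1) 0).

Definition Fser : Ser :=
  sprod [:: sconst Fpref;
    sprod_inf (fun m => sprod (nseq 8 (geom m1 m)));
    sprod_inf (fun m => if odd m then
        sprod [:: geom mum2 m; geom mu2 m; geom mup m; geom mupi m;
                  geom muip m; geom muipi m; geom m1 m; geom m1 m]
      else sone)].

Definition Bser (b : nat -> nat -> nat) : Ser :=
  fun d => [seq MkMon ((-1) ^+ i * (b i d)%:Z) 0 (i%:Z - (2 * d + 1)%:Z)
           | i <- iota 0 (4 * d + 3)].

Definition Hser : Ser :=
  sprod_inf (fun m =>
    sprod [:: oneminus mu2 (2 * m); oneminus mum2 (2 * m);
              oneminus m1 (2 * m); oneminus m1 (2 * m);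
              geom mup (2 * m); geom muipi (2 * m);
              geom muip (2 * m); geom mupi (2 * m)]).

Definition RHSser (b : nat -> nat -> nat) : Ser := ssub Fser (smul (Bser b) Hser).

(* In the q^d coefficient of the correction term Bser b * Hser every monomial
   has p-exponent at least -d/2: Bser involves no p, and the factors of Hser
   are series in q^(2m) whose coefficient of q^(2mk) has p-exponent at least
   -k.  Hence that correction contributes nothing to the coefficient of
   p^i u^j q^d when i < -d/2, and there the assumed identity reduces to the
   coefficient of F. *)
From mathcomp Require Import all_boot all_order all_algebra.
From mathcomp Require Import zify ring lra.
Import Order.TTheory GRing.Theory Num.Theory.
Local Open Scope ring_scope.

(* Twice the p-exponent is bounded, to avoid halving the degree in q. *)
Definition pval2_ge (n : int) (f : Laur) : bool := all (fun t => n <= 2 * mpe t) f.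

Lemma pval2_ge_le {m n : int} {f : Laur} : m <= n -> pval2_ge n f -> pval2_ge m f.
Proof. by move=> lemn; apply: sub_all => t; apply: le_trans. Qed.

Lemma pval2_ge_cat (n : int) (f g : Laur) :
  pval2_ge n (f ++ g) = pval2_ge n f && pval2_ge n g.
Proof. exact: all_cat. Qed.

Lemma pval2_ge_flatten (n : int) (s : seq Laur) :
  pval2_ge n (flatten s) = all (pval2_ge n) s.
Proof. by elim: s => //= f s IHs; rewrite pval2_ge_cat IHs. Qed.

Lemma pval2_ge_lopp (n : int) (f : Laur) : pval2_ge n (lopp f) = pval2_ge n f.
Proof. by rewrite /pval2_ge all_map. Qed.

Lemma pval2_ge_lmul {m n : int} {f g : Laur} :
  pval2_ge m f -> pval2_ge n g -> pval2_ge (m + n) (lmul f g).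
Proof.
elim: f => [|s f IHf] //= /andP[hs hf] hg.
rewrite pval2_ge_cat IHf // andbT /pval2_ge all_map.
by apply: sub_all hg => t /= ht; lia.
Qed.

Lemma pval2_ge_lexp {n : int} {f : Laur} (k : nat) :
  pval2_ge n f -> pval2_ge (n * k%:Z) (lexp f k).
Proof.
move=> hf; elim: k => [|k IHk] /=; first by rewrite mulr0 /pval2_ge /=.
by rewrite intS mulrDr mulr1; apply: pval2_ge_lmul.
Qed.

Lemma lcoef_eq0 {n : int} {f : Laur} {i : int} (j : int) :
  pval2_ge n f -> 2 * i < n -> lcoef f i j = 0.
Proof.
move=> + hi; elim: f => [|t f IHf] /=; first by rewrite /lcoef big_nil.
move=> /andP[ht hf]; rewrite /lcoef big_cons -/(lcoef f i j) IHf //.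
by case: ifP => // /andP[/eqP ti _]; move: ht; rewrite ti; lia.
Qed.

Lemma lcoef_cat (f g : Laur) (i j : int) :
  lcoef (f ++ g) i j = lcoef f i j + lcoef g i j.
Proof. exact: big_cat. Qed.

Definition pbounded (A : Ser) : Prop := forall d : nat, pval2_ge (- d%:Z) (A d).

Lemma smul_pbounded {A B : Ser} : pbounded A -> pbounded B -> pbounded (smul A B).
Proof.
move=> hA hB d; rewrite /smul pval2_ge_flatten all_map.
apply/allP => k; rewrite mem_iota => /andP[_ ltkd] /=.
have -> : - d%:Z = - k%:Z + - (d - k)%N%:Z by lia.
exact: pval2_ge_lmul.
Qed.

Lemma sone_pbounded : pbounded sone.
Proof. by move=> [|d] //=; rewrite /pval2_ge /=. Qed.

Lemma sprod_pbounded (G : nat -> Ser) (s : seq nat) :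
  (forall m, m \in s -> pbounded (G m)) -> pbounded (sprod (map G s)).
Proof.
elim: s => [|m s IHs] hG /=; first exact: sone_pbounded.
apply: smul_pbounded; first by apply: hG; rewrite mem_head.
by apply: IHs => k ks; apply: hG; rewrite inE ks orbT.
Qed.

Lemma geom_pbounded (c : Laur) (m : nat) :
  (2 <= m)%N -> pval2_ge (-2) c -> pbounded (geom c m).
Proof.
move=> m_ge2 hc d; rewrite /geom; case: ifP => // _.
apply: pval2_ge_le (pval2_ge_lexp (d %/ m) hc).
have := leq_divM d m.
have : (2 * (d %/ m) <= d %/ m * m)%N by rewrite mulnC leq_mul2l m_ge2 orbT.
lia.
Qed.

Lemma oneminus_pbounded (c : Laur) (m : nat) :
  pval2_ge 0 c -> pbounded (oneminus c m).
Proof.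
move=> hc d; rewrite /oneminus /sadd /ladd pval2_ge_cat sone_pbounded /=.
by case: ifP => // _; rewrite pval2_ge_lopp; apply: pval2_ge_le hc; lia.
Qed.

Lemma Bser_pbounded (b : nat -> nat -> nat) : pbounded (Bser b).
Proof. by move=> d; rewrite /pval2_ge all_map; apply/allP => i _ /=; lia. Qed.

Lemma Hser_pbounded : pbounded Hser.
Proof.
move=> d; apply: sprod_pbounded => m; rewrite mem_iota => /andP[m_gt0 _].
have m2_ge2 : (2 <= 2 * m)%N by lia.
have om c : pval2_ge 0 c -> pbounded (oneminus c (2 * m)) by apply: oneminus_pbounded.
have gm c : pval2_ge (-2) c -> pbounded (geom c (2 * m)) by apply: geom_pbounded.
rewrite /sprod /=.
do 8![apply: smul_pbounded; first by [apply: om | apply: gm]].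
exact: sone_pbounded.
Qed.

Lemma Coeff_RHSser (b : nat -> nat -> nat) (d : nat) (i j : int) :
  2 * i < - d%:Z -> Coeff (RHSser b) d i j = Coeff Fser d i j.
Proof.
move=> hi; have hBH : pval2_ge (- d%:Z) (lopp (smul (Bser b) Hser d)).
  by rewrite pval2_ge_lopp; apply: smul_pbounded (Bser_pbounded b) Hser_pbounded d.
by rewrite /Coeff /RHSser /ssub /sadd /ladd /sopp lcoef_cat (lcoef_eq0 _ hBH hi) addr0.
Qed.

Lemma ltr_neg_half (R : realFieldType) (i : int) (d : nat) :
  i%:~R < - (d%:R / 2) - 1 :> R -> 2 * i < - d%:Z.
Proof.
move=> hi; rewrite -(ltr_int R) rmorphM rmorphN /= -pmulrn.
have -> : (2 : int)%:~R = 2 :> R by [].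
lra.
Qed.

Theorem lemma3p8 (ph : nat -> int -> int -> nat) (b : nat -> nat -> nat) :
  (forall (d : nat) (i j : int),
      (ph d i j)%:Z * (-1) ^ (i + j) = Coeff (RHSser b) d i j) ->
  forall (d : nat) (i j : int),
    (i%:~R < - (d%:R / 2) - 1 :> rat) -> (j%:~R < - (d%:R / 2) - 1 :> rat) ->
    (ph d i j)%:Z * (-1) ^ (i + j) = Coeff Fser d i j.
Proof.
move=> hRHS d i j /ltr_neg_half hi _.
by rewrite hRHS Coeff_RHSser.
Qed.
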